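(* Let $m\le n$, $a>0$, $\lambda>0$, and let $Y\in\mathbb{R}^{m\times n}$ have singular value decomposition $Y = U\,\mathrm{Diag}(\sigma)\,V^T$ with $\sigma=(\sigma_1,\dots,\sigma_m)$, $\sigma_1\ge\dots\ge\sigma_m\ge0$, $U,V$ orthogonal. Then $$X^s = G_{\lambda,a}(Y) := U\,\mathrm{Diag}\big(g_{\lambda,a}(\sigma_1),\dots,g_{\lambda,a}(\sigma_m)\big)\,V^T$$ is a global minimizer of $\min_{X\in\mathbb{R}^{m\times n}} \tfrac12\|X-Y\|_F^2+\lambda T(X)$.
   Context: For $a>0$, $\rho_a(x)=\frac{(a+1)x}{a+x}$ for $x\ge0$. The transformed Schatten-1 penalty of $X\in\mathbb{R}^{m\times n}$ is $T(X)=\sum_{i=1}^{\mathrm{rank}(X)}\rho_a(\sigma_i(X))$, where $\sigma_i(X)$ are the singular values of $X$. For $\lambda>0$ define, with $\mathrm{sgn}(0)=0$, $$h_\lambda(x)=\mathrm{sgn}(x)\left\{\tfrac23(a+|x|)\cos\!\big(\tfrac{\varphi(x)}{3}\big)-\tfrac{2a}{3}+\tfrac{|x|}{3}\right\},\qquad \varphi(x)=\arccos\!\Big(1-\frac{27\lambda a(a+1)}{2(a+|x|)^3}\Big),$$ and the threshold $t=\lambda\frac{a+1}{a}$ if $\lambda\le\frac{a^2}{2(a+1)}$, and $t=\sqrt{2\lambda(a+1)}-\frac a2$ if $\lambda>\frac{a^2}{2(a+1)}$. The scalar thresholding function is $g_{\lambda,a}(w)=0$ if $|w|\le t$ and $g_{\lambda,a}(w)=h_\lambda(w)$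 if $|w|>t$. (It is known that $g_{\lambda,a}(x)$ is a minimizer of $y\mapsto\frac12(y-x)^2+\lambda\rho_a(|y|)$ over $y\in\mathbb{R}$.) $\|\cdot\|_F$ is the Frobenius norm. *)

From Stdlib Require Import Reals Lra.
Open Scope R_scope.

(* Matrices are represented as functions nat -> nat -> R; only the entries
   with indices below the stated dimensions are ever relevant. *)
Definition Mat := nat -> nat -> R.

Fixpoint rsum (n : nat) (f : nat -> R) : R :=
  match n with O => 0 | S k => rsum k f + f k end.

Definition mmul (p : nat) (A B : Mat) : Mat :=
  fun i j => rsum p (fun l => A i l * B l j).

Definition trans (A : Mat) : Mat := fun i j => A j i.

Definition Diag (s : nat -> R) : Mat :=
  fun i j => if Nat.eq_dec i j then s i else 0.

Definition mat_eq (m n : nat) (A B : Mat) : Prop :=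
  forall i j, (i < m)%nat -> (j < n)%nat -> A i j = B i j.

Definition orthogonal (k : nat) (U : Mat) : Prop :=
  forall i j, (i < k)%nat -> (j < k)%nat ->
    mmul k (trans U) U i j = if Nat.eq_dec i j then 1 else 0.

Definition svd_mat (m n : nat) (U : Mat) (s : nat -> R) (V : Mat) : Mat :=
  mmul n (mmul m U (Diag s)) (trans V).

Definition is_svd (m n : nat) (X U : Mat) (s : nat -> R) (V : Mat) : Prop :=
  orthogonal m U /\ orthogonal n V /\
  (forall i, (i < m)%nat -> 0 <= s i) /\
  (forall i j, (i <= j)%nat -> (j < m)%nat -> s j <= s i) /\
  mat_eq m n X (svd_mat m n U s V).

Definition singvals (m n : nat) (X : Mat) (s : nat -> R) : Prop :=
  exists U V, is_svd m n X U s V.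

Definition rho (a x : R) : R := (a + 1) * x / (a + x).

(* T(X) = sum_{i <= rank X} rho_a(sigma_i(X)) = sum over the nonzero
   singular values (rank X = number of nonzero singular values). *)
Definition Tpen (a : R) (m : nat) (s : nat -> R) : R :=
  rsum m (fun i => if Rlt_dec 0 (s i) then rho a (s i) else 0).

Definition fro2 (m n : nat) (A : Mat) : R :=
  rsum m (fun i => rsum n (fun j => (A i j) ^ 2)).

Definition msub (A B : Mat) : Mat := fun i j => A i j - B i j.

Definition sgn (x : R) : R :=
  if Rlt_dec 0 x then 1 else if Rlt_dec x 0 then -1 else 0.

Definition phi (lam a x : R) : R :=
  acos (1 - 27 * lam * a * (a + 1) / (2 * (a + Rabs x) ^ 3)).

Definition h (lam a x : R) : R :=
  sgn x * (2 / 3 * (a + Rabs x) * cos (phi lam a x / 3) - 2 * a / 3 + Rabs x / 3).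

Definition thr (lam a : R) : R :=
  if Rle_dec lam (a ^ 2 / (2 * (a + 1))) then lam * (a + 1) / a
  else sqrt (2 * lam * (a + 1)) - a / 2.

Definition g (lam a w : R) : R :=
  if Rle_dec (Rabs w) (thr lam a) then 0 else h lam a w.

Definition obj (m n : nat) (lam a : R) (Y X : Mat) (sX : nat -> R) : R :=
  / 2 * fro2 m n (msub X Y) + lam * Tpen a m sX.

(* By von Neumann's trace inequality <X, Y> <= sum_i sigma_i(X) sigma_i(Y), hence
   ||X - Y||_F^2 >= sum_i (sigma_i(X) - sigma_i(Y))^2, with equality when X shares
   the singular vectors of Y.  The objective is thus bounded below by a sum of m
   scalar problems min_{y >= 0} 1/2 (y - sigma_i)^2 + lam rho_a(y), and G(Y) attains
   this bound: g_{lam,a}(sigma_i) solves the i-th scalar problem (above the threshold,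
   a + g is the largest root of the cubic stationarity condition, given by the
   trigonometric formula), and g is nondecreasing, so U Diag(g(sigma)) V^T is an SVD.
   The trace inequality follows from Bessel's inequality, which makes the entrywise
   products |(P^T U)_kl (Q^T V)_kl| a doubly substochastic matrix. *)

From Stdlib Require Import Arith Reals Lra Psatz Lia.
Open Scope R_scope.

(** * Finite sums *)

Lemma rsum_S n f : rsum (S n) f = rsum n f + f n.
Proof. reflexivity. Qed.

Lemma rsum_ext n f f' : (forall i, (i < n)%nat -> f i = f' i) -> rsum n f = rsum n f'.
Proof.
  induction n as [|n IH]; intros H; simpl; auto.
  rewrite IH, H; auto; intros; apply H; lia.
Qed.

Lemma rsum_le n f f' : (forall i, (i < n)%nat -> f i <= f' i) -> rsum n f <= rsum n f'.
Proof.
  induction n as [|n IH]; intros H; simpl; [lra|].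
  assert (rsum n f <= rsum n f') by (apply IH; intros; apply H; lia).
  assert (f n <= f' n) by (apply H; lia). lra.
Qed.

Lemma rsum_const0 n : rsum n (fun _ => 0) = 0.
Proof. induction n as [|n IH]; simpl; [|rewrite IH]; ring. Qed.

Lemma rsum_nonneg n f : (forall i, (i < n)%nat -> 0 <= f i) -> 0 <= rsum n f.
Proof. intros H. rewrite <- (rsum_const0 n). now apply rsum_le. Qed.

Lemma rsum_plus n f f' : rsum n (fun i => f i + f' i) = rsum n f + rsum n f'.
Proof. induction n as [|n IH]; simpl; [|rewrite IH]; ring. Qed.

Lemma rsum_scal n c f : rsum n (fun i => c * f i) = c * rsum n f.
Proof. induction n as [|n IH]; simpl; [|rewrite IH]; ring. Qed.

Lemma rsum_scal_r n c f : rsum n (fun i => f i * c) = rsum n f * c.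
Proof. induction n as [|n IH]; simpl; [|rewrite IH]; ring. Qed.

Lemma rsum_swap n m (F : nat -> nat -> R) :
  rsum n (fun i => rsum m (fun j => F i j)) = rsum m (fun j => rsum n (fun i => F i j)).
Proof.
  induction n as [|n IH]; simpl.
  - now rewrite rsum_const0.
  - now rewrite IH, <- rsum_plus.
Qed.

Lemma rsum_mult n m f f' :
  rsum n f * rsum m f' = rsum n (fun i => rsum m (fun j => f i * f' j)).
Proof.
  rewrite <- rsum_scal_r. apply rsum_ext. intros. now rewrite <- rsum_scal.
Qed.

Lemma rsum_delta_r n k f :
  rsum n (fun l => if Nat.eq_dec k l then f l else 0) = if lt_dec k n then f k else 0.
Proof.
  induction n as [|n IH]; simpl.
  - destruct (lt_dec k 0); [lia | reflexivity].
  - rewrite IH. destruct (Nat.eq_dec k n), (lt_dec k n), (lt_dec k (S n));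
      subst; try lia; ring.
Qed.

Lemma rsum_delta_l n k f :
  rsum n (fun l => if Nat.eq_dec l k then f l else 0) = if lt_dec k n then f k else 0.
Proof.
  rewrite <- rsum_delta_r. apply rsum_ext. intros i _.
  destruct (Nat.eq_dec i k), (Nat.eq_dec k i); subst; auto; lia.
Qed.

Lemma rsum_vanishing_tail m n f : (m <= n)%nat ->
  (forall i, (m <= i < n)%nat -> f i = 0) -> rsum n f = rsum m f.
Proof.
  intros Hmn. induction Hmn as [|n Hmn IH]; intros H; auto.
  simpl. rewrite IH, (H n); [ring | lia |]. intros; apply H; lia.
Qed.

Lemma rsum_nonneg_eq0 n f : (forall i, (i < n)%nat -> 0 <= f i) -> rsum n f <= 0 ->
  forall i, (i < n)%nat -> f i = 0.
Proof.
  induction n as [|n IH]; intros H S i Hi; [lia|]. simpl in S.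
  assert (0 <= rsum n f) by (apply rsum_nonneg; intros; apply H; lia).
  assert (0 <= f n) by (apply H; lia).
  destruct (Nat.eq_dec i n) as [->|]; [lra|].
  apply IH; [intros; apply H; lia | lra | lia].
Qed.

(** * The scalar proximal problem *)

Lemma cos_3a t : cos (3 * t) = 4 * cos t ^ 3 - 3 * cos t.
Proof.
  replace (3 * t) with (2 * t + t) by ring.
  rewrite cos_plus, cos_2a, sin_2a.
  pose proof (sin2 t) as Hs. unfold Rsqr in Hs.
  replace (2 * sin t * cos t * sin t) with (2 * cos t * (sin t * sin t)) by ring.
  rewrite Hs. ring.
Qed.

Lemma cos_acos_div3 v : -1 <= v <= 1 ->
  let u := cos (acos v / 3) in 1/2 <= u <= 1 /\ 4 * u ^ 3 - 3 * u = v.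
Proof.
  intros Hv u. pose proof (acos_bound v). pose proof PI_RGT_0.
  split; [split|].
  - rewrite <- cos_PI3. apply cos_decr_1; lra.
  - apply COS_bound.
  - unfold u. rewrite <- cos_3a. replace (3 * (acos v / 3)) with (acos v) by field.
    now apply cos_acos.
Qed.

Lemma chebyshev3_lt u w : 1/2 <= u -> u < w -> 4 * u ^ 3 - 3 * u < 4 * w ^ 3 - 3 * w.
Proof.
  intros Hu Huw.
  assert (0 < (w - u) * (4 * (w * w + w * u + u * u) - 3)) by (apply Rmult_lt_0_compat; nra).
  nra.
Qed.

Definition cubic (p c w : R) : R := w ^ 3 - p * w ^ 2 + c.

Definition cubic_root (p c : R) : R :=
  p / 3 * (1 + 2 * cos (acos (1 - 27 * c / (2 * p ^ 3)) / 3)).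

(* The substitution w = p/3 (1 + 2u) turns the cubic into the Chebyshev
   polynomial 4u^3 - 3u, which cos_acos_div3 inverts. *)
Lemma cubic_chebyshev p c u : 0 < p ->
  cubic p c (p / 3 * (1 + 2 * u))
  = 2 * p ^ 3 / 27 * ((4 * u ^ 3 - 3 * u) - (1 - 27 * c / (2 * p ^ 3))).
Proof. intros Hp. unfold cubic. field. lra. Qed.

Lemma cubic_root_spec p c w0 : 0 < p -> 0 < c -> - (p / 3) <= w0 -> cubic p c w0 <= 0 ->
  cubic p c (cubic_root p c) = 0 /\
  forall w, cubic p c w <= 0 -> w <= cubic_root p c.
Proof.
  intros Hp Hc Hw0 Hq0.
  set (v := 1 - 27 * c / (2 * p ^ 3)).
  assert (Hp3 : 0 < 2 * p ^ 3 / 27) by (assert (0 < p ^ 3) by (apply pow_lt; lra); lra).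
  set (scale := fun w => (3 * w / p - 1) / 2).
  assert (Escale : forall w, w = p / 3 * (1 + 2 * scale w)) by (intros; unfold scale; field; lra).
  assert (Hcheb : forall w, cubic p c w <= 0 -> 4 * scale w ^ 3 - 3 * scale w <= v).
  { intros w Hw. rewrite (Escale w), cubic_chebyshev in Hw by lra. fold v in Hw. nra. }
  assert (Hv : -1 <= v <= 1).
  { split.
    - assert (-1 <= scale w0)
        by (unfold scale; apply (Rmult_le_reg_r p); [lra | field_simplify; lra]).
      pose proof (Hcheb w0 Hq0).
      assert (0 <= (scale w0 + 1) * ((2 * scale w0 - 1) * (2 * scale w0 - 1)))
        by (apply Rmult_le_pos; [lra | apply Rle_0_sqr]).
      nra.
    - assert (0 <= 27 * c / (2 * p ^ 3))
        by (apply Rmult_le_pos; [lra | left; apply Rinv_0_lt_compat; lra]).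
      unfold v; lra. }
  destruct (cos_acos_div3 v Hv) as [Hu Huv].
  unfold cubic_root; fold v.
  set (u := cos (acos v / 3)) in *.
  split.
  - rewrite cubic_chebyshev by lra. fold v. rewrite Huv. ring.
  - intros w Hw. destruct (Rle_lt_dec w (p / 3 * (1 + 2 * u))) as [|Hlt]; auto.
    exfalso. rewrite (Escale w) in Hlt.
    assert (Huw : u < scale w) by nra.
    pose proof (chebyshev3_lt u (scale w) (proj1 Hu) Huw).
    pose proof (Hcheb w Hw). lra.
Qed.

Definition pen (a y : R) : R := if Rlt_dec 0 y then rho a y else 0.

Definition prox_obj (lam a x y : R) : R := / 2 * (y - x) ^ 2 + lam * pen a y.

Lemma pen_nonneg_eq a y : 0 < a -> 0 <= y -> pen a y = (a + 1) * y / (a + y).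
Proof.
  intros Ha Hy. unfold pen, rho. destruct (Rlt_dec 0 y); auto.
  replace y with 0 by lra. field. lra.
Qed.

(* At the largest root z of the cubic the second term vanishes, and z >= x + a/2
   makes the first one nonnegative: this is why a + g is that root. *)
Lemma prox_obj_sub_cubic lam a x y z : 0 < a -> 0 <= y -> a <= z ->
  prox_obj lam a x y - prox_obj lam a x (z - a)
  = (a + y - z) ^ 2 * (a + y + 2 * z - 2 * (a + x)) / (2 * (a + y))
    + (a + y - z) / ((a + y) * z) * cubic (a + x) (lam * a * (a + 1)) z.
Proof.
  intros Ha Hy Hz. unfold prox_obj, cubic.
  rewrite !pen_nonneg_eq by lra. field. lra.
Qed.

Section Thresholding.

Variables lam a : R.
Hypothesis Ha : 0 < a.
Hypothesis Hlam : 0 < lam.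

Let s := sqrt (2 * lam * (a + 1)).

Lemma sqrt_2lam_sq : 0 <= s /\ s ^ 2 = 2 * lam * (a + 1).
Proof.
  split; [apply sqrt_pos|]. unfold s. rewrite pow2_sqrt; [reflexivity | nra].
Qed.

Lemma thr_cases :
  (2 * lam * (a + 1) <= a ^ 2 /\ thr lam a = lam * (a + 1) / a) \/
  (a ^ 2 < 2 * lam * (a + 1) /\ thr lam a = s - a / 2).
Proof.
  unfold thr. destruct (Rle_dec lam (a ^ 2 / (2 * (a + 1)))) as [Hle|Hgt]; [left|right].
  - split; [|reflexivity].
    apply (Rmult_le_compat_r (2 * (a + 1))) in Hle; [|lra].
    replace (a ^ 2 / (2 * (a + 1)) * (2 * (a + 1))) with (a ^ 2) in Hle by (field; lra). lra.
  - split; [|reflexivity]. apply Rnot_le_lt in Hgt.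
    apply (Rmult_lt_compat_r (2 * (a + 1))) in Hgt; [|lra].
    replace (a ^ 2 / (2 * (a + 1)) * (2 * (a + 1))) with (a ^ 2) in Hgt by (field; lra). lra.
Qed.

Lemma thr_pos : 0 < thr lam a.
Proof.
  destruct sqrt_2lam_sq as [Hs Hs2].
  destruct thr_cases as [[_ ->]|[Hsmall ->]].
  - apply Rdiv_lt_0_compat; nra.
  - nra.
Qed.

Lemma thr_lt_sq x : thr lam a < x -> 2 * lam * (a + 1) <= (x + a / 2) ^ 2.
Proof.
  destruct sqrt_2lam_sq as [Hs Hs2].
  destruct thr_cases as [[_ ->]|[_ ->]]; intros Hx.
  - set (t := lam * (a + 1) / a) in *.
    assert (Et : 2 * lam * (a + 1) = 2 * a * t) by (unfold t; field; lra).
    assert (0 < t) by (unfold t; apply Rdiv_lt_0_compat; nra).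
    rewrite Et. pose proof (pow2_ge_0 (x - a / 2)). nra.
  - nra.
Qed.

Lemma thr_lt_cases x : thr lam a < x -> lam * (a + 1) <= a * x \/ a / 2 <= x.
Proof.
  destruct sqrt_2lam_sq as [Hs Hs2].
  destruct thr_cases as [[_ ->]|[Hbig ->]]; intros Hx; [left|right].
  - apply (Rmult_lt_compat_l a) in Hx; [|lra].
    replace (a * (lam * (a + 1) / a)) with (lam * (a + 1)) in Hx by (field; lra). lra.
  - nra.
Qed.

Lemma thr_ge_quadratic x y : 0 <= x <= thr lam a -> 0 <= y ->
  0 <= y ^ 2 + (a - 2 * x) * y + 2 * lam * (a + 1) - 2 * a * x.
Proof.
  destruct sqrt_2lam_sq as [Hs Hs2].
  destruct thr_cases as [[Hsmall ->]|[_ ->]]; intros Hx Hy.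
  - assert (Hax : a * x <= lam * (a + 1)).
    { assert (Hx' : a * x <= a * (lam * (a + 1) / a)) by (apply Rmult_le_compat_l; lra).
      replace (a * (lam * (a + 1) / a)) with (lam * (a + 1)) in Hx' by (field; lra). lra. }
    assert (0 <= y + a - 2 * x) by nra.
    nra.
  - assert ((x + a / 2) ^ 2 <= 2 * lam * (a + 1)) by nra.
    pose proof (pow2_ge_0 (y - x + a / 2)). nra.
Qed.

Lemma g_small x : 0 <= x <= thr lam a -> g lam a x = 0.
Proof.
  intros Hx. unfold g. destruct (Rle_dec _ _) as [|Hn]; auto.
  rewrite Rabs_right in Hn; lra.
Qed.

Lemma g_large x : thr lam a < x ->
  g lam a x = cubic_root (a + x) (lam * a * (a + 1)) - a.
Proof.
  intros Hx. pose proof thr_pos.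
  unfold g. destruct (Rle_dec _ _) as [Hle|_].
  { rewrite Rabs_right in Hle; lra. }
  unfold h, phi, sgn, cubic_root. destruct (Rlt_dec 0 x); [|lra].
  rewrite Rabs_right by lra.
  replace (27 * lam * a * (a + 1)) with (27 * (lam * a * (a + 1))) by ring.
  field.
Qed.

Lemma cubic_root_large x : thr lam a < x ->
  let z := cubic_root (a + x) (lam * a * (a + 1)) in
  cubic (a + x) (lam * a * (a + 1)) z = 0 /\ a <= z /\ x + a / 2 <= z.
Proof.
  intros Hx z. pose proof thr_pos.
  assert (Hc : 0 < lam * a * (a + 1)) by (apply Rmult_lt_0_compat; nra).
  assert (Hw0 : cubic (a + x) (lam * a * (a + 1)) (x + a / 2) <= 0).
  { pose proof (thr_lt_sq x Hx). unfold cubic.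
    replace ((x + a / 2) ^ 3 - (a + x) * (x + a / 2) ^ 2 + lam * a * (a + 1))
      with (a / 2 * (2 * lam * (a + 1) - (x + a / 2) ^ 2)) by field.
    assert (0 < a / 2) by lra. nra. }
  destruct (cubic_root_spec (a + x) _ (x + a / 2) ltac:(lra) Hc ltac:(lra) Hw0)
    as [Hroot Hmax].
  fold z in Hroot, Hmax.
  repeat split; auto.
  destruct (thr_lt_cases x Hx) as [Hax|Hx2].
  - apply Hmax. unfold cubic.
    replace (a ^ 3 - (a + x) * a ^ 2 + lam * a * (a + 1)) with (a * (lam * (a + 1) - a * x))
      by ring.
    nra.
  - pose proof (Hmax _ Hw0). lra.
Qed.

Lemma g_nonneg x : 0 <= x -> 0 <= g lam a x.
Proof.
  intros Hx. destruct (Rle_lt_dec x (thr lam a)).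
  - rewrite g_small; lra.
  - rewrite g_large by auto. destruct (cubic_root_large x) as (_ & Hza & _); auto. lra.
Qed.

Lemma g_prox_min x y : 0 <= x -> 0 <= y -> prox_obj lam a x (g lam a x) <= prox_obj lam a x y.
Proof.
  intros Hx Hy. destruct (Rle_lt_dec x (thr lam a)) as [Hsmall|Hlarge].
  - rewrite g_small by lra.
    unfold prox_obj. rewrite !pen_nonneg_eq by lra.
    pose proof (thr_ge_quadratic x y (conj Hx Hsmall) Hy).
    assert (0 <= y * (y ^ 2 + (a - 2 * x) * y + 2 * lam * (a + 1) - 2 * a * x) / (2 * (a + y)))
      by (apply Rmult_le_pos; [nra | left; apply Rinv_0_lt_compat; lra]).
    assert (E : / 2 * (y - x) ^ 2 + lam * ((a + 1) * y / (a + y))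
                - (/ 2 * (0 - x) ^ 2 + lam * ((a + 1) * 0 / (a + 0)))
                = y * (y ^ 2 + (a - 2 * x) * y + 2 * lam * (a + 1) - 2 * a * x) / (2 * (a + y)))
      by (field; lra).
    lra.
  - rewrite g_large by auto.
    destruct (cubic_root_large x Hlarge) as [Hroot [Hza Hzx]].
    set (z := cubic_root _ _) in *.
    pose proof (prox_obj_sub_cubic lam a x y z Ha Hy Hza) as E.
    rewrite Hroot, Rmult_0_r, Rplus_0_r in E.
    assert (0 <= (a + y - z) ^ 2 * (a + y + 2 * z - 2 * (a + x)) / (2 * (a + y)))
      by (apply Rmult_le_pos; [apply Rmult_le_pos; [apply pow2_ge_0 | lra]
                              | left; apply Rinv_0_lt_compat; lra]).
    lra.
Qed.

Lemma g_nondecreasing x1 x2 : 0 <= x1 -> x1 <= x2 -> g lam a x1 <= g lam a x2.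
Proof.
  intros H1 H12.
  pose proof (g_prox_min x1 (g lam a x2) H1 (g_nonneg x2 ltac:(lra))) as M1.
  pose proof (g_prox_min x2 (g lam a x1) ltac:(lra) (g_nonneg x1 H1)) as M2.
  unfold prox_obj in M1, M2.
  destruct (Rle_lt_dec (g lam a x1) (g lam a x2)); auto.
  destruct (Req_dec x1 x2) as [<-|]; [lra|].
  assert (0 < (g lam a x1 - g lam a x2) * (x2 - x1)) by (apply Rmult_lt_0_compat; lra).
  nra.
Qed.

End Thresholding.

(** * The trace inequality *)

Lemma rsum2_S_of_last_zero m (F : nat -> nat -> R) :
  (forall l, F m l = 0) -> (forall k, F k m = 0) ->
  rsum (S m) (fun k => rsum (S m) (F k)) = rsum m (fun k => rsum m (F k)).
Proof.
  intros Hrow Hcol. rewrite rsum_S, (rsum_ext _ (F m) (fun _ => 0)), rsum_const0 by auto.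
  rewrite Rplus_0_r. apply rsum_ext. intros k _. rewrite rsum_S, Hcol. ring.
Qed.

Lemma rsum2_shift M (s r : nat -> R) (N : Mat) c d :
  rsum M (fun k => rsum M (fun l => s k * r l * N k l)) =
  rsum M (fun k => rsum M (fun l => (s k - c) * (r l - d) * N k l))
  + d * rsum M (fun k => (s k - c) * rsum M (fun l => N k l))
  + c * rsum M (fun l => r l * rsum M (fun k => N k l)).
Proof.
  transitivity (rsum M (fun k => rsum M (fun l => (s k - c) * (r l - d) * N k l)
     + d * ((s k - c) * rsum M (fun l => N k l)) + rsum M (fun l => c * (r l * N k l)))).
  - apply rsum_ext; intros. rewrite <- !rsum_scal, <- !rsum_plus.
    apply rsum_ext; intros. ring.
  - rewrite !rsum_plus, rsum_scal. f_equal.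
    rewrite rsum_swap, <- rsum_scal. apply rsum_ext; intros. now rewrite !rsum_scal.
Qed.

(* Induct after subtracting the smallest entries s_m, r_m, which leaves the last
   row and column with zero weight. *)
Lemma doubly_substochastic_le m : forall (s r : nat -> R) (N : Mat),
  (forall i, (i < m)%nat -> 0 <= s i) ->
  (forall i j, (i <= j)%nat -> (j < m)%nat -> s j <= s i) ->
  (forall i, (i < m)%nat -> 0 <= r i) ->
  (forall i j, (i <= j)%nat -> (j < m)%nat -> r j <= r i) ->
  (forall k l, (k < m)%nat -> (l < m)%nat -> 0 <= N k l) ->
  (forall k, (k < m)%nat -> rsum m (fun l => N k l) <= 1) ->
  (forall l, (l < m)%nat -> rsum m (fun k => N k l) <= 1) ->
  rsum m (fun k => rsum m (fun l => s k * r l * N k l)) <= rsum m (fun k => s k * r k).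
Proof.
  induction m as [|m IH]; intros s r N Hs Hsd Hr Hrd HN Hrow Hcol; [simpl; lra|].
  set (c := s m). set (d := r m).
  assert (Hc : 0 <= c) by (apply Hs; lia).
  assert (Hd : 0 <= d) by (apply Hr; lia).
  rewrite (rsum2_shift (S m) s r N c d).
  replace (rsum (S m) (fun k => s k * r k)) with
    (rsum (S m) (fun k => (s k - c) * (r k - d))
     + d * rsum (S m) (fun k => s k - c) + c * rsum (S m) r)
    by (rewrite <- !rsum_scal, <- !rsum_plus; apply rsum_ext; intros; ring).
  assert (Brow : rsum (S m) (fun k => (s k - c) * rsum (S m) (fun l => N k l))
                 <= rsum (S m) (fun k => s k - c)).
  { apply rsum_le; intros k Hk. pose proof (Hsd k m ltac:(lia) ltac:(lia)). pose proof (Hrow k Hk).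
    unfold c. nra. }
  assert (Bcol : rsum (S m) (fun l => r l * rsum (S m) (fun k => N k l)) <= rsum (S m) r).
  { apply rsum_le; intros l Hl. pose proof (Hr l Hl). pose proof (Hcol l Hl). nra. }
  assert (Bshift : rsum (S m) (fun k => rsum (S m) (fun l => (s k - c) * (r l - d) * N k l))
                   <= rsum (S m) (fun k => (s k - c) * (r k - d))).
  { rewrite rsum2_S_of_last_zero by (intros; unfold c, d; ring).
    rewrite rsum_S. replace ((s m - c) * (r m - d)) with 0 by (unfold c; ring).
    rewrite Rplus_0_r.
    apply (IH (fun k => s k - c) (fun k => r k - d) N).
    - intros i Hi. pose proof (Hsd i m ltac:(lia) ltac:(lia)). unfold c; lra.
    - intros i j Hij Hj. pose proof (Hsd i j Hij ltac:(lia)). lra.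
    - intros i Hi. pose proof (Hrd i m ltac:(lia) ltac:(lia)). unfold d; lra.
    - intros i j Hij Hj. pose proof (Hrd i j Hij ltac:(lia)). lra.
    - intros; apply HN; lia.
    - intros k Hk. pose proof (Hrow k ltac:(lia)). pose proof (HN k m ltac:(lia) ltac:(lia)).
      simpl in *. lra.
    - intros l Hl. pose proof (Hcol l ltac:(lia)). pose proof (HN m l ltac:(lia) ltac:(lia)).
      simpl in *. lra. }
  apply (Rmult_le_compat_l d) in Brow; auto.
  apply (Rmult_le_compat_l c) in Bcol; auto.
  lra.
Qed.

Definition svd_sum (m : nat) (U : Mat) (s : nat -> R) (V : Mat) : Mat :=
  fun i j => rsum m (fun k => U i k * s k * V j k).

Definition fip (m n : nat) (A B : Mat) : R :=
  rsum m (fun i => rsum n (fun j => A i j * B i j)).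

Lemma svd_mat_sum m n U s V : (m <= n)%nat -> forall i j,
  svd_mat m n U s V i j = svd_sum m U s V i j.
Proof.
  intros Hmn i j. unfold svd_mat, mmul, trans, Diag, svd_sum.
  transitivity (rsum n (fun l => if lt_dec l m then U i l * s l * V j l else 0)).
  - apply rsum_ext. intros l _.
    transitivity (rsum m (fun k => if Nat.eq_dec k l then U i k * s k else 0) * V j l).
    + f_equal. apply rsum_ext. intros k _. destruct (Nat.eq_dec k l); ring.
    + rewrite rsum_delta_l. destruct (lt_dec l m); ring.
  - rewrite (rsum_vanishing_tail m n) by (auto; intros k Hk; destruct (lt_dec k m); auto; lia).
    apply rsum_ext. intros k Hk. destruct (lt_dec k m); auto; lia.
Qed.

Lemma is_svd_sum m n X U s V : (m <= n)%nat -> is_svd m n X U s V ->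
  mat_eq m n X (svd_sum m U s V).
Proof.
  intros Hmn (_ & _ & _ & _ & HX) i j Hi Hj. rewrite HX by auto. now apply svd_mat_sum.
Qed.

Lemma fip_ext m n A A' B B' :
  mat_eq m n A A' -> mat_eq m n B B' -> fip m n A B = fip m n A' B'.
Proof.
  intros HA HB. apply rsum_ext. intros. apply rsum_ext. intros. now rewrite HA, HB.
Qed.

Lemma fro2_msub m n X Y :
  fro2 m n (msub X Y) = fip m n X X - 2 * fip m n X Y + fip m n Y Y.
Proof.
  unfold fro2, msub, fip.
  transitivity (rsum m (fun i => rsum n (fun j => X i j * X i j)
     + (-2) * rsum n (fun j => X i j * Y i j) + rsum n (fun j => Y i j * Y i j))).
  - apply rsum_ext. intros. rewrite <- rsum_scal, <- !rsum_plus. apply rsum_ext. intros. ring.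
  - rewrite !rsum_plus, rsum_scal. ring.
Qed.

Lemma fip_svd_sum m n U s V P r Q :
  fip m n (svd_sum m U s V) (svd_sum m P r Q) =
  rsum m (fun k => rsum m (fun l =>
    s k * r l * (mmul m (trans U) P k l * mmul n (trans V) Q k l))).
Proof.
  unfold fip, svd_sum, mmul, trans.
  transitivity (rsum m (fun i => rsum n (fun j => rsum m (fun k => rsum m (fun l =>
     U i k * s k * V j k * (P i l * r l * Q j l)))))).
  { apply rsum_ext; intros; apply rsum_ext; intros. apply rsum_mult. }
  transitivity (rsum m (fun i => rsum m (fun k => rsum m (fun l => rsum n (fun j =>
     U i k * s k * V j k * (P i l * r l * Q j l)))))).
  { apply rsum_ext; intros. rewrite rsum_swap. apply rsum_ext; intros. apply rsum_swap. }
  rewrite rsum_swap. apply rsum_ext; intros k _. rewrite rsum_swap.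
  apply rsum_ext; intros l _. rewrite rsum_mult, <- rsum_scal.
  apply rsum_ext; intros i _. rewrite <- rsum_scal. apply rsum_ext; intros j _. ring.
Qed.

Lemma fip_svd_sum_same m n U s V r : (m <= n)%nat -> orthogonal m U -> orthogonal n V ->
  fip m n (svd_sum m U s V) (svd_sum m U r V) = rsum m (fun k => s k * r k).
Proof.
  intros Hmn HU HV. rewrite fip_svd_sum. apply rsum_ext. intros k Hk.
  transitivity (rsum m (fun l => if Nat.eq_dec k l then s k * r l else 0)).
  - apply rsum_ext; intros l Hl. rewrite HU, HV by lia.
    destruct (Nat.eq_dec k l); ring.
  - rewrite rsum_delta_r. destruct (lt_dec k m); auto; lia.
Qed.

Lemma bessel N K (p : Mat) (x : nat -> R) :
  (forall l l', (l < K)%nat -> (l' < K)%nat ->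
     rsum N (fun i => p i l * p i l') = if Nat.eq_dec l l' then 1 else 0) ->
  rsum K (fun l => (rsum N (fun i => x i * p i l)) ^ 2) <= rsum N (fun i => x i * x i).
Proof.
  intros Hp.
  set (c := fun l => rsum N (fun i => x i * p i l)).
  set (e := fun i => rsum K (fun l => c l * p i l)).
  assert (Hres : 0 <= rsum N (fun i => (x i - e i) ^ 2))
    by (apply rsum_nonneg; intros; apply pow2_ge_0).
  assert (Exe : rsum N (fun i => x i * e i) = rsum K (fun l => c l * c l)).
  { unfold e. transitivity (rsum N (fun i => rsum K (fun l => c l * (x i * p i l)))).
    - apply rsum_ext; intros. rewrite <- rsum_scal. apply rsum_ext; intros. ring.
    - rewrite rsum_swap. apply rsum_ext; intros. now rewrite rsum_scal. }
  assert (Eee : rsum N (fun i => e i * e i) = rsum K (fun l => c l * c l)).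
  { unfold e. transitivity (rsum N (fun i => rsum K (fun l => rsum K (fun l' =>
        c l * c l' * (p i l * p i l'))))).
    - apply rsum_ext; intros. rewrite rsum_mult. apply rsum_ext; intros.
      apply rsum_ext; intros. ring.
    - rewrite rsum_swap. apply rsum_ext; intros l Hl. rewrite rsum_swap.
      transitivity (rsum K (fun l' => if Nat.eq_dec l l' then c l * c l' else 0)).
      + apply rsum_ext; intros l' Hl'. rewrite rsum_scal, Hp by auto.
        destruct (Nat.eq_dec l l'); ring.
      + rewrite rsum_delta_r. destruct (lt_dec l K); [subst; auto | lia]. }
  replace (rsum N (fun i => (x i - e i) ^ 2)) with
    (rsum N (fun i => x i * x i) + (-2) * rsum N (fun i => x i * e i)
     + rsum N (fun i => e i * e i)) in Hres
    by (rewrite <- rsum_scal, <- !rsum_plus; apply rsum_ext; intros; ring).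
  replace (rsum K (fun l => (rsum N (fun i => x i * p i l)) ^ 2))
    with (rsum K (fun l => c l * c l)) by (apply rsum_ext; intros; unfold c; ring).
  lra.
Qed.

Lemma orthogonal_cross_row m n U P : (m <= n)%nat -> orthogonal n U -> orthogonal n P ->
  forall k, (k < n)%nat -> rsum m (fun l => (mmul n (trans U) P k l) ^ 2) <= 1.
Proof.
  intros Hmn HU HP k Hk.
  eapply Rle_trans; [apply (bessel n m P (fun i => U i k)); intros; apply HP; lia|].
  pose proof (HU k k Hk Hk) as Hkk. unfold mmul, trans in Hkk.
  destruct (Nat.eq_dec k k); [lra | congruence].
Qed.

Lemma orthogonal_cross_col m n U P : (m <= n)%nat -> orthogonal n U -> orthogonal n P ->
  forall l, (l < n)%nat -> rsum m (fun k => (mmul n (trans U) P k l) ^ 2) <= 1.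
Proof.
  intros Hmn HU HP l Hl.
  rewrite (rsum_ext m _ (fun k => (mmul n (trans P) U l k) ^ 2)).
  - now apply orthogonal_cross_row.
  - intros. unfold mmul, trans. f_equal. apply rsum_ext; intros; ring.
Qed.

Lemma rsum_abs_mul_le1 m f f' :
  rsum m (fun l => f l ^ 2) <= 1 -> rsum m (fun l => f' l ^ 2) <= 1 ->
  rsum m (fun l => Rabs (f l * f' l)) <= 1.
Proof.
  intros Hf Hf'.
  apply Rle_trans with (rsum m (fun l => / 2 * f l ^ 2 + / 2 * f' l ^ 2)).
  - apply rsum_le; intros l _.
    pose proof (pow2_ge_0 (f l - f' l)). pose proof (pow2_ge_0 (f l + f' l)).
    unfold Rabs. destruct (Rcase_abs (f l * f' l)); nra.
  - rewrite rsum_plus, !rsum_scal. lra.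
Qed.

Lemma von_neumann_trace m n X P t Q Y U s V : (m <= n)%nat ->
  is_svd m n X P t Q -> is_svd m n Y U s V ->
  fip m n X Y <= rsum m (fun k => t k * s k).
Proof.
  intros Hmn HX HY.
  rewrite (fip_ext m n _ _ _ _ (is_svd_sum _ _ _ _ _ _ Hmn HX) (is_svd_sum _ _ _ _ _ _ Hmn HY)).
  destruct HX as (HP & HQ & Ht & Htd & _), HY as (HU & HV & Hs & Hsd & _).
  rewrite fip_svd_sum.
  set (C1 := mmul m (trans P) U). set (C2 := mmul n (trans Q) V).
  apply Rle_trans with
    (rsum m (fun k => rsum m (fun l => t k * s l * Rabs (C1 k l * C2 k l)))).
  - apply rsum_le; intros k Hk; apply rsum_le; intros l Hl.
    apply Rmult_le_compat_l; [apply Rmult_le_pos; auto | apply Rle_abs].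
  - apply doubly_substochastic_le; auto.
    + intros; apply Rabs_pos.
    + intros k Hk. apply rsum_abs_mul_le1.
      * now apply orthogonal_cross_row.
      * apply orthogonal_cross_row; auto; lia.
    + intros l Hl. apply rsum_abs_mul_le1.
      * now apply orthogonal_cross_col.
      * apply orthogonal_cross_col; auto; lia.
Qed.

Lemma fro2_msub_svd_ge m n X P t Q Y U s V : (m <= n)%nat ->
  is_svd m n X P t Q -> is_svd m n Y U s V ->
  rsum m (fun k => (t k - s k) ^ 2) <= fro2 m n (msub X Y).
Proof.
  intros Hmn HX HY.
  assert (Hself : forall Z W r R, is_svd m n Z W r R -> fip m n Z Z = rsum m (fun k => r k * r k)).
  { intros Z W r R HZ. pose proof (is_svd_sum _ _ _ _ _ _ Hmn HZ) as EZ.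
    destruct HZ as (HW & HR & _). rewrite (fip_ext m n _ _ _ _ EZ EZ).
    now apply fip_svd_sum_same. }
  rewrite fro2_msub, (Hself _ _ _ _ HX), (Hself _ _ _ _ HY).
  pose proof (von_neumann_trace _ _ _ _ _ _ _ _ _ _ Hmn HX HY).
  replace (rsum m (fun k => (t k - s k) ^ 2)) with
    (rsum m (fun k => t k * t k) + (-2) * rsum m (fun k => t k * s k)
     + rsum m (fun k => s k * s k))
    by (rewrite <- rsum_scal, <- !rsum_plus; apply rsum_ext; intros; ring).
  lra.
Qed.

Lemma fro2_msub_svd_mat m n U r s V Y : (m <= n)%nat -> is_svd m n Y U s V ->
  fro2 m n (msub (svd_mat m n U r V) Y) = rsum m (fun k => (r k - s k) ^ 2).
Proof.
  intros Hmn HY.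
  assert (EX : mat_eq m n (svd_mat m n U r V) (svd_sum m U r V))
    by (intros i j _ _; now apply svd_mat_sum).
  pose proof (is_svd_sum _ _ _ _ _ _ Hmn HY) as EY.
  destruct HY as (HU & HV & _).
  rewrite fro2_msub, (fip_ext m n _ _ _ _ EX EX), (fip_ext m n _ _ _ _ EX EY),
    (fip_ext m n _ _ _ _ EY EY), !fip_svd_sum_same by auto.
  replace (rsum m (fun k => (r k - s k) ^ 2)) with
    (rsum m (fun k => r k * r k) + (-2) * rsum m (fun k => r k * s k)
     + rsum m (fun k => s k * s k))
    by (rewrite <- rsum_scal, <- !rsum_plus; apply rsum_ext; intros; ring).
  ring.
Qed.

Lemma singvals_svd_mat m n U s V r : (m <= n)%nat -> orthogonal m U -> orthogonal n V ->
  (forall i, (i < m)%nat -> 0 <= s i) ->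
  (forall i j, (i <= j)%nat -> (j < m)%nat -> s j <= s i) ->
  singvals m n (svd_mat m n U s V) r -> forall k, (k < m)%nat -> r k = s k.
Proof.
  intros Hmn HU HV Hs Hsd [P [Q Hsvd]] k Hk.
  assert (Hself : is_svd m n (svd_mat m n U s V) U s V)
    by (repeat split; auto; intros i j _ _; reflexivity).
  pose proof (fro2_msub_svd_ge _ _ _ _ _ _ _ _ _ _ Hmn Hsvd Hself) as Hle.
  rewrite fro2_msub in Hle.
  replace (fip m n _ _ - 2 * fip m n _ _ + fip m n _ _) with 0 in Hle by ring.
  pose proof (rsum_nonneg_eq0 m _ (fun i _ => pow2_ge_0 (r i - s i)) Hle k Hk). nra.
Qed.

Lemma rsum_prox_obj m lam a s t :
  rsum m (fun k => prox_obj lam a (s k) (t k))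
  = / 2 * rsum m (fun k => (t k - s k) ^ 2) + lam * Tpen a m t.
Proof. unfold prox_obj, Tpen. rewrite <- !rsum_scal, <- rsum_plus. reflexivity. Qed.

Theorem theorem3 (m n : nat) (a lam : R) (Y U V : Mat) (sigma : nat -> R) :
  (m <= n)%nat -> 0 < a -> 0 < lam ->
  is_svd m n Y U sigma V ->
  forall sXs : nat -> R,
    singvals m n (svd_mat m n U (fun i => g lam a (sigma i)) V) sXs ->
  forall (X : Mat) (sX : nat -> R), singvals m n X sX ->
    obj m n lam a Y (svd_mat m n U (fun i => g lam a (sigma i)) V) sXs
    <= obj m n lam a Y X sX.
Proof.
  intros Hmn Ha Hlam HY sXs HsXs X sX [P [Q HX]].
  pose proof HY as (HU & HV & Hsig & Hsigd & _).
  set (gs := fun i => g lam a (sigma i)) in *.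
  assert (Hsing : forall k, (k < m)%nat -> sXs k = gs k).
  { apply (singvals_svd_mat m n U gs V); auto.
    - intros i Hi. now apply g_nonneg, Hsig.
    - intros i j Hij Hj. apply g_nondecreasing; auto. }
  unfold obj. rewrite (fro2_msub_svd_mat m n U gs sigma V Y Hmn HY).
  replace (Tpen a m sXs) with (Tpen a m gs)
    by (apply rsum_ext; intros k Hk; now rewrite Hsing).
  rewrite <- rsum_prox_obj.
  apply Rle_trans with (rsum m (fun k => prox_obj lam a (sigma k) (sX k))).
  - apply rsum_le; intros k Hk. apply g_prox_min; auto.
    destruct HX as (_ & _ & HsX & _). auto.
  - rewrite rsum_prox_obj.
    pose proof (fro2_msub_svd_ge _ _ _ _ _ _ _ _ _ _ Hmn HX HY). lra.
Qed.
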